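(* Let $R$ be a Noetherian ring and let $E^\bullet$ be a bounded-above complex of $R$-modules such that $H^i(E^\bullet)$ is a finitely generated $R$-module for every $i$. Let $F^\bullet$ be a bounded-above complex of finitely generated free $R$-modules together with a quasi-isomorphism $\phi:F^\bullet\to E^\bullet$ (such $F^\bullet$ always exists). Define $$J^i_k(E^\bullet)=I_{\operatorname{rank}(F^i)-k+1}(d^{i-1}\oplus d^i),$$ where $d^{i-1}:F^{i-1}\to F^i$ and $d^i:F^i\to F^{i+1}$ are the differentials of $F^\bullet$, $d^{i-1}\oplus d^i:F^{i-1}\oplus F^i\to F^i\oplus F^{i+1}$, and $I_r(\cdot)$ denotes the ideal of $R$ generated by the $r\times r$ minors of a matrix representing the map. Then the ideal $J^i_k(E^\bullet)$ does not depend on the choice of $F^\bullet$ and $\phi$.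
   Context: Convention for determinantal ideals: $I_r(\cdot)=R$ for $r\le 0$, and $I_r(\cdot)=0$ if $r$ exceeds the size of the matrix. The ideals $J^i_k(E^\bullet)$ are called the cohomology jump ideals of $E^\bullet$. *)

From HB Require Import structures.
From mathcomp Require Import all_boot all_order all_algebra.
Set Implicit Arguments. Unset Strict Implicit. Unset Printing Implicit Defensive.
Import Order.TTheory GRing.Theory Num.Theory.
Local Open Scope ring_scope.

Section Defs.
Variable R : comNzRingType.

Definition is_ideal (I : R -> Prop) : Prop :=
  [/\ I 0, (forall x y, I x -> I y -> I (x + y)) & (forall a x, I x -> I (a * x))].

Definition in_span (s : seq R) (x : R) : Prop :=
  exists c : 'I_(size s) -> R, x = \sum_(j < size s) c j * s`_j.

Definition noetherian : Prop :=
  forall I : R -> Prop, is_ideal I ->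
    exists s : seq R, forall x, I x <-> in_span s x.

(* I_r(A): ideal generated by the r x r minors of A, with I_r = R for r <= 0
   and I_r = 0 if r exceeds the size of the matrix *)
Definition minor_ideal (r : int) (m n : nat) (A : 'M[R]_(m, n)) (x : R) : Prop :=
  if r <= 0 then True
  else if (minn m n < `|r|)%N then x = 0
  else exists (k : nat) (c : 'I_k -> R)
              (f : 'I_k -> 'I_`|r| -> 'I_m) (g : 'I_k -> 'I_`|r| -> 'I_n),
         x = \sum_(j < k) c j * \det (mxsub (f j) (g j) A).

Definition is_complex (M : int -> lmodType R)
    (d : forall i : int, {linear M i -> M (i + 1)}) : Prop :=
  forall i (x : M i), d (i + 1) (d i x) = 0.

Definition bounded_above (M : int -> lmodType R) : Prop :=
  exists N : int, forall i : int, N < i -> forall x : M i, x = 0.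

Definition cocycle (M : int -> lmodType R)
    (d : forall i : int, {linear M i -> M (i + 1)}) (i : int) (x : M i) : Prop :=
  d i x = 0.

Definition coboundary (M : int -> lmodType R)
    (d : forall i : int, {linear M i -> M (i + 1)}) (i : int) (x : M i) : Prop :=
  exists (j : int) (e : j + 1 = i) (y : M j),
    x = eq_rect (j + 1) (fun t => (M t : Type)) (d j y) i e.

Definition fg_cohomology (M : int -> lmodType R)
    (d : forall i : int, {linear M i -> M (i + 1)}) (i : int) : Prop :=
  exists s : seq (M i), (forall z, z \in s -> cocycle d z) /\
    forall z : M i, cocycle d z ->
      exists c : 'I_(size s) -> R,
        coboundary d (z - \sum_(j < size s) c j *: s`_j).

Definition chain_map (M N : int -> lmodType R)
    (dM : forall i : int, {linear M i -> M (i + 1)})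
    (dN : forall i : int, {linear N i -> N (i + 1)})
    (phi : forall i : int, {linear M i -> N i}) : Prop :=
  forall i (x : M i), phi (i + 1) (dM i x) = dN i (phi i x).

Definition quasi_iso (M N : int -> lmodType R)
    (dM : forall i : int, {linear M i -> M (i + 1)})
    (dN : forall i : int, {linear N i -> N (i + 1)})
    (phi : forall i : int, {linear M i -> N i}) : Prop :=
  [/\ chain_map dM dN phi,
      (forall i (z : N i), cocycle dN z ->
         exists x : M i, cocycle dM x /\ coboundary dN (z - phi i x))
    & (forall i (x : M i), cocycle dM x -> coboundary dN (phi i x) ->
         coboundary dM x)].

(* A complex of finitely generated free modules F^i = R^(n i) (row vectors),
   with differential d^i : F^i -> F^(i+1), v |-> v *m D i. *)
Definition free_mod (n : int -> nat) (i : int) : lmodType R := 'rV[R]_(n i).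

Definition free_diff (n : int -> nat) (D : forall i : int, 'M[R]_(n i, n (i + 1)))
  (i : int) : {linear free_mod n i -> free_mod n (i + 1)} := mulmxr (D i).

Definition sum_diff (n : int -> nat) (D : forall i : int, 'M[R]_(n i, n (i + 1)))
  (i : int) := block_mx (D (i - 1)) 0 0 (D i).

Definition jump_ideal (n : int -> nat) (D : forall i : int, 'M[R]_(n i, n (i + 1)))
  (i k : int) : R -> Prop :=
  minor_ideal ((n i)%:Z - k + 1) (sum_diff D i).

End Defs.

From HB Require Import structures.
From mathcomp Require Import all_boot all_order all_algebra perm zify ring.
Set Implicit Arguments. Unset Strict Implicit. Unset Printing Implicit Defensive.
Import Order.TTheory GRing.Theory Num.Theory.
Local Open Scope ring_scope.

(* Since F1 and F2 are bounded above, free, and quasi-isomorphic to E, a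
   descending induction (the comparison theorem) gives a chain map
   f : F1 -> F2 with phi2 o f homotopic to phi1.  Its mapping cone is then
   exact, bounded above and free, so a second descending induction makes it
   split exact.  The mapping cylinder of f is isomorphic, by explicit block
   base changes, both to F1 (+) cone(f) and to F2 (+) T with T split exact.
   Minor ideals of d^(i-1) (+) d^i are invariant under such isomorphisms, and
   a split exact summand of rank b in degree i shifts the index by b: after a
   base change it becomes an identity block, and I_(r+b)(A (+) 1_b) = I_r(A).
   The hypotheses on R and E only guarantee that F1 and F2 exist. *)

Definition split_fun s1 s2 T (f1 : 'I_s1 -> T) (f2 : 'I_s2 -> T) (k : 'I_(s1 + s2)) : T :=
  match split k with inl i => f1 i | inr j => f2 j end.

Lemma split_ordD m1 m2 (i : 'I_(m1 + m2)) :
  (exists2 k, i = lshift m2 k & (i < m1)%N) \/ (exists2 k, i = rshift m1 k & (m1 <= i)%N).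
Proof.
case: (splitP i) => k ik; [left | right]; exists k; rewrite ?ik ?leq_addr //.
all: exact: val_inj.
Qed.

Section MinorsSpan.
Variable R : comNzRingType.

Definition minors_span s m n (A : 'M[R]_(m, n)) (x : R) : Prop :=
  exists (k : nat) (c : 'I_k -> R) (f : 'I_k -> 'I_s -> 'I_m) (g : 'I_k -> 'I_s -> 'I_n),
    x = \sum_(j < k) c j * \det (mxsub (f j) (g j) A).

Lemma minors_span0 s m n (A : 'M[R]_(m, n)) : minors_span s A 0.
Proof.
have f0 T : 'I_0 -> T by case.
by exists 0%N, (fun _ => 0), (f0 _), (f0 _); rewrite big_ord0.
Qed.

Lemma minors_span_minor s m n (A : 'M[R]_(m, n)) (f : 'I_s -> 'I_m) (g : 'I_s -> 'I_n) :
  minors_span s A (\det (mxsub f g A)).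
Proof.
by exists 1%N, (fun _ => 1), (fun _ => f), (fun _ => g); rewrite big_ord1 mul1r.
Qed.

Lemma minors_spanD s m n (A : 'M[R]_(m, n)) x y :
  minors_span s A x -> minors_span s A y -> minors_span s A (x + y).
Proof.
move=> [k1 [c1 [f1 [g1 ->]]]] [k2 [c2 [f2 [g2 ->]]]].
exists (k1 + k2)%N, (split_fun c1 c2), (split_fun f1 f2), (split_fun g1 g2).
rewrite big_split_ord /=; congr (_ + _); apply: eq_bigr => j _.
  by rewrite /split_fun (unsplitK (inl _)).
by rewrite /split_fun (unsplitK (inr _)).
Qed.

Lemma minors_spanMl s m n (A : 'M[R]_(m, n)) a x :
  minors_span s A x -> minors_span s A (a * x).
Proof.
move=> [k [c [f [g ->]]]]; exists k, (fun j => a * c j), f, g.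
by rewrite big_distrr; apply: eq_bigr => j _ /=; rewrite mulrA.
Qed.

Lemma minors_span_sum s m n (A : 'M[R]_(m, n)) (I : finType) (F : I -> R) :
  (forall i, minors_span s A (F i)) -> minors_span s A (\sum_i F i).
Proof.
by move=> HF; apply: big_ind => //; [exact: minors_span0 | exact: minors_spanD].
Qed.

Lemma minors_span_trans s s' m n m' n' (A : 'M[R]_(m, n)) (B : 'M[R]_(m', n')) x :
  minors_span s A x ->
  (forall (f : 'I_s -> 'I_m) (g : 'I_s -> 'I_n), minors_span s' B (\det (mxsub f g A))) ->
  minors_span s' B x.
Proof.
move=> [k [c [f [g ->]]]] HB.
by apply: minors_span_sum => j; apply: minors_spanMl; apply: HB.
Qed.

(* Half of the Cauchy--Binet formula: expand along the rows of [U]. *)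
Lemma det_mulmx_expand r p (U : 'M[R]_(r, p)) (V : 'M[R]_(p, r)) :
  \det (U *m V) =
  \sum_(f : {ffun 'I_r -> 'I_p}) (\prod_i U i (f i)) * \det (rowsub f V).
Proof.
rewrite /determinant.
pose AB (s : 'S_r) i j := U i j * V j (s i).
transitivity (\sum_(f : {ffun 'I_r -> 'I_p}) \sum_(s : 'S_r) (-1) ^+ s * \prod_i AB s i (f i)).
  rewrite exchange_big; apply: eq_bigr => /= s _; rewrite -big_distrr /=.
  congr (_ * _); rewrite -(bigA_distr_bigA (AB s)) /=.
  by apply: eq_bigr => x _; rewrite mxE.
apply: eq_bigr => f _; rewrite big_distrr /=; apply: eq_bigr => s _.
rewrite /AB big_split /= mulrCA; congr (_ * (_ * _)).
by apply: eq_bigr => i _; rewrite mxE.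
Qed.

Lemma det_mulmx3_minors_span r p q (U : 'M[R]_(r, p)) (A : 'M[R]_(p, q)) (W : 'M[R]_(q, r)) :
  minors_span r A (\det (U *m (A *m W))).
Proof.
rewrite det_mulmx_expand; apply: minors_span_sum => f; apply: minors_spanMl.
rewrite -mul_rowsub_mx -det_tr trmx_mul det_mulmx_expand.
apply: minors_span_sum => h; apply: minors_spanMl.
suff -> : rowsub h (rowsub f A)^T = (mxsub f h A)^T by rewrite det_tr; apply: minors_span_minor.
by apply/matrixP => i j; rewrite !mxE.
Qed.

Lemma minors_span_mulmx s m n m' n' (X : 'M[R]_(m', m)) (A : 'M[R]_(m, n)) (Y : 'M[R]_(n, n')) x :
  minors_span s (X *m A *m Y) x -> minors_span s A x.
Proof.
move/minors_span_trans; apply => f g.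
by rewrite mxsub_mul -mul_rowsub_mx -mulmxA; apply: det_mulmx3_minors_span.
Qed.

Lemma det_mxsub_expand_col s m n (A : 'M[R]_(m, n)) (f : 'I_s.+1 -> 'I_m) (g : 'I_s.+1 -> 'I_n) j0 :
  \det (mxsub f g A) = \sum_i A (f i) (g j0) *
     ((-1) ^+ (i + j0) * \det (mxsub (f \o lift i) (g \o lift j0) A)).
Proof.
rewrite (expand_det_col _ j0); apply: eq_bigr => i _; rewrite mxE /cofactor.
by congr (_ * (_ * \det _)); apply/matrixP => k l; rewrite !mxE.
Qed.

Lemma minors_spanS s m n (A : 'M[R]_(m, n)) x :
  minors_span s.+1 A x -> minors_span s A x.
Proof.
move/minors_span_trans; apply=> f g; rewrite (det_mxsub_expand_col _ _ _ ord0).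
by apply: minors_span_sum => i; do 2!apply: minors_spanMl; apply: minors_span_minor.
Qed.

Lemma minors_span_leq s s' m n (A : 'M[R]_(m, n)) x :
  (s <= s')%N -> minors_span s' A x -> minors_span s A x.
Proof.
move/subnKC <-; elim: (s' - s)%N => [|d IH]; first by rewrite addn0.
by rewrite addnS => /minors_spanS.
Qed.

Lemma det_mxsub_oversize s m n (A : 'M[R]_(m, n)) (f : 'I_s -> 'I_m) (g : 'I_s -> 'I_n) :
  (minn m n < s)%N -> \det (mxsub f g A) = 0.
Proof.
rewrite gtn_min => /orP[] lt_s.
  have /injectivePn[i1 [i2 ne_i fi]] : ~~ injectiveb f.
    by apply/injectiveP => /leq_card; rewrite !card_ord leqNgt lt_s.
  by apply: (determinant_alternate ne_i) => j; rewrite !mxE fi.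
have /injectivePn[j1 [j2 ne_j gj]] : ~~ injectiveb g.
  by apply/injectiveP => /leq_card; rewrite !card_ord leqNgt lt_s.
by rewrite -det_tr; apply: (determinant_alternate ne_j) => i; rewrite !mxE gj.
Qed.

Lemma minors_span_oversize s m n (A : 'M[R]_(m, n)) x :
  (minn m n < s)%N -> minors_span s A x -> x = 0.
Proof.
move=> lt_s [k [c [f [g ->]]]]; apply: big1 => j _.
by rewrite det_mxsub_oversize // mulr0.
Qed.

(* [minor_ideal] without its oversize clause, which is automatic. *)
Definition minorI (r : int) m n (A : 'M[R]_(m, n)) (x : R) : Prop :=
  r <= 0 \/ minors_span `|r| A x.

Lemma minor_idealE r m n (A : 'M[R]_(m, n)) x : minor_ideal r A x <-> minorI r A x.
Proof.
rewrite /minor_ideal /minorI; case: ifP => r_le0; first by split => // _; left.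
case: ifP => oversize; last by split => [|[]] //; right.
split=> [->|[] //]; first by right; apply: minors_span0.
exact: minors_span_oversize.
Qed.

Lemma minorI_mulmx r m n m' n' (X : 'M[R]_(m', m)) (A : 'M[R]_(m, n)) (Y : 'M[R]_(n, n')) B x :
  X *m A *m Y = B -> minorI r B x -> minorI r A x.
Proof. by move=> <- [|/minors_span_mulmx]; [left | right]. Qed.

End MinorsSpan.

Lemma mxsub_block (R : Type) a b c d s1 s2 t1 t2 (A : 'M[R]_(a, b)) (B : 'M[R]_(a, d))
    (C : 'M[R]_(c, b)) (D : 'M[R]_(c, d)) (f1 : 'I_s1 -> 'I_a) (f2 : 'I_s2 -> 'I_c)
    (g1 : 'I_t1 -> 'I_b) (g2 : 'I_t2 -> 'I_d) :
  mxsub (split_fun (lshift c \o f1) (@rshift a _ \o f2))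
        (split_fun (lshift d \o g1) (@rshift b _ \o g2)) (block_mx A B C D)
  = block_mx (mxsub f1 g1 A) (mxsub f1 g2 B) (mxsub f2 g1 C) (mxsub f2 g2 D).
Proof.
apply/matrixP => k l; rewrite mxE /split_fun.
case: (split_ordD k) => [[k' -> _] | [k' -> _]];
case: (split_ordD l) => [[l' -> _] | [l' -> _]];
by rewrite ?(unsplitK (inl _)) ?(unsplitK (inr _)) /=
  ?block_mxEul ?block_mxEur ?block_mxEdl ?block_mxEdr !mxE.
Qed.

Section IdentityBlock.
Variables (R : comNzRingType) (a b m : nat) (A : 'M[R]_(a, b)).
Let A1 := block_mx A 0 0 (1%:M : 'M[R]_m).

Definition id_cols s (g : 'I_s -> 'I_(b + m)) : nat := \sum_(j < s) (b <= g j)%N.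

(* Expanding along the columns taken from the identity block removes them one by one. *)
Lemma block1_minor_span s (f : 'I_s -> 'I_(a + m)) (g : 'I_s -> 'I_(b + m)) :
  minors_span (s - id_cols g) A (\det (mxsub f g A1)).
Proof.
elim: s f g => [|s IH] f g.
  have f0 T : 'I_0 -> T by case.
  by have := minors_span_minor A (f0 _) (f0 _); rewrite sub0n !det_mx00.
have [j0 gj0 | /= g_left] := pickP (fun j => b <= g j)%N.
  rewrite (det_mxsub_expand_col _ _ _ j0).
  have -> : (s.+1 - id_cols g = s - id_cols (g \o lift j0))%N.
    by rewrite /id_cols (bigD1_ord j0) //= gj0 add1n subSS.
  by apply: minors_span_sum => i; do 2!apply: minors_spanMl; apply: IH.
rewrite /id_cols big1 ?subn0 => [|j _]; last by rewrite g_left.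
have g_lshift j : exists2 k, g j = lshift m k & (g j < b)%N.
  by case: (split_ordD (g j)) => [//|[k _ le_b]]; move: (g_left j); rewrite /= le_b.
have [i0 fi0 | /= f_up] := pickP (fun i => a <= f i)%N.
  rewrite (expand_det_row _ i0) big1 => [|j _]; first exact: minors_span0.
  rewrite mxE; case: (g_lshift j) => k -> _; case: (split_ordD (f i0)) => [[l _ lt_a] | [l -> _]].
    by move: fi0; rewrite leqNgt lt_a.
  by rewrite /A1 block_mxEdl mxE mul0r.
have fa : (f ord0 < a)%N by rewrite ltnNge f_up.
have gb : (g ord0 < b)%N by rewrite ltnNge g_left.
pose f' i : 'I_a := insubd (Ordinal fa) (f i).
pose g' j : 'I_b := insubd (Ordinal gb) (g j).
suff -> : mxsub f g A1 = mxsub f' g' A by apply: minors_span_minor.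
apply/matrixP => i j; rewrite mxE [RHS]mxE.
have -> : f i = lshift m (f' i) by apply: val_inj; rewrite /= val_insubd ltnNge f_up.
have -> : g j = lshift m (g' j) by apply: val_inj; rewrite /= val_insubd ltnNge g_left.
by rewrite /A1 block_mxEul.
Qed.

Lemma id_cols_le s (g : 'I_s -> 'I_(b + m)) : injective g -> (id_cols g <= m)%N.
Proof.
move=> inj_g.
have -> : id_cols g = #|[set j | (b <= g j)%N]|.
  rewrite /id_cols -sum1_card [RHS]big_mkcond /=.
  by apply: eq_bigr => j _; rewrite inE; case: (b <= g j)%N.
rewrite -(card_imset _ inj_g) -[X in (_ <= X)%N]card_ord -(card_imset _ (@rshift_inj b m)).
apply/subset_leq_card/subsetP => y /imsetP[j]; rewrite inE => le_b ->.
case: (split_ordD (g j)) => [[k _ lt_b] | [k -> _]]; last exact: imset_f.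
by move: le_b; rewrite leqNgt lt_b.
Qed.

Lemma minorI_block1_sub (r : int) x : minorI (r + m%:Z) A1 x -> minorI r A x.
Proof.
case: (lerP r 0) => [|r_gt0]; first by left.
case: r r_gt0 => [r' _ | //].
case=> [le0 | span_x]; first by left; rewrite (le_trans _ le0) // lerDl.
right; apply: (minors_span_trans span_x) => f g.
have [/injectiveP inj_g | /injectivePn[j1 [j2 ne_j gj]]] := boolP (injectiveb g).
  apply: (minors_span_leq _ (block1_minor_span f g)).
  by have := id_cols_le inj_g; lia.
suff -> : \det (mxsub f g A1) = 0 by apply: minors_span0.
by rewrite -det_tr; apply: (determinant_alternate ne_j) => i; rewrite !mxE gj.
Qed.

Lemma minorI_block1_sup (r : int) x : minorI r A x -> minorI (r + m%:Z) A1 x.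
Proof.
case: (lerP (r + m%:Z) 0) => [|rm_gt0]; first by left.
case: (lerP r 0) => [r_le0 _ | r_gt0].
  have le_rm : (`|(r + m%:Z)%R| <= m)%N by lia.
  pose w (k : 'I_`|r + m%:Z|) : 'I_m := widen_ord le_rm k.
  suff e : mxsub (@rshift a _ \o w) (@rshift b _ \o w) A1 = 1%:M.
    right; have := minors_spanMl x (minors_span_minor A1 (@rshift a _ \o w) (@rshift b _ \o w)).
    by rewrite e det1 mulr1.
  by apply/matrixP => k l; rewrite !mxE /= (unsplitK (inr _)) /= !mxE (unsplitK (inr _)) !mxE.
move: rm_gt0 r_gt0; case: r => [r' _ r'_gt0 | //].
case=> [|span_x]; first by rewrite leNgt r'_gt0.
right; apply: (minors_span_trans span_x) => f g.
pose F := split_fun (lshift m \o f) (@rshift a _ \o id).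
pose G := split_fun (lshift m \o g) (@rshift b _ \o id).
suff -> : \det (mxsub f g A) = \det (mxsub F G A1) by apply: minors_span_minor.
by rewrite mxsub_block !mxsub_const det_ublock mxsub_id det1 mulr1.
Qed.

Lemma minorI_block1 (r : int) x : minorI (r + m%:Z) A1 x <-> minorI r A x.
Proof. by split; [apply: minorI_block1_sub | apply: minorI_block1_sup]. Qed.

End IdentityBlock.

Ltac block_simpl := repeat progress rewrite ?mulmx_block ?mul_col_row ?mul_row_col
  ?mul_mx_row ?mul_col_mx ?mul_row_block ?mul_block_col ?mulmx0 ?mul0mx ?mulmx1 ?mul1mx
  ?addr0 ?add0r ?add_block_mx ?add_row_mx ?add_col_mx ?row_mx0 ?col_mx0 ?block_mx0.

Lemma add_corner_blocks (R : nmodType) m1 m2 n1 n2 (A : 'M[R]_(m1, n1)) (D : 'M[R]_(m2, n2)) :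
  col_mx (row_mx A 0) 0 + row_mx 0 (col_mx 0 D) = block_mx A 0 0 D.
Proof.
apply/matrixP => i j.
case: (split_ordD i) => [[i' -> _] | [i' -> _]]; case: (split_ordD j) => [[j' -> _] | [j' -> _]].
all: by rewrite [LHS]mxE ?col_mxEu ?col_mxEd ?row_mxEl ?row_mxEr ?block_mxEul ?block_mxEur
  ?block_mxEdl ?block_mxEdr ?col_mxEu ?col_mxEd ?row_mxEl ?row_mxEr ?mxE ?addr0 ?add0r.
Qed.

Section DiagonalComplexes.
Variable R : comNzRingType.

Lemma minorI_diag_iso a b c a' b' c' (al : 'M[R]_(a, b)) (be : 'M[R]_(b, c))
    (al' : 'M[R]_(a', b')) (be' : 'M[R]_(b', c'))
    (P0 : 'M[R]_(a, a')) (P1 : 'M[R]_(b, b')) (P2 : 'M[R]_(c, c'))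
    (Q0 : 'M[R]_(a', a)) (Q1 : 'M[R]_(b', b)) (Q2 : 'M[R]_(c', c)) :
    al *m P1 = P0 *m al' -> be *m P2 = P1 *m be' ->
    Q0 *m P0 = 1%:M -> P1 *m Q1 = 1%:M -> Q1 *m P1 = 1%:M -> P2 *m Q2 = 1%:M ->
  forall r x, minorI r (block_mx al 0 0 be) x <-> minorI r (block_mx al' 0 0 be') x.
Proof.
move=> al_P be_P Q0P0 P1Q1 Q1P1 P2Q2 r x; split.
  apply: (minorI_mulmx (X := block_mx P0 0 0 P1) (Y := block_mx Q1 0 0 Q2)).
  by block_simpl; rewrite -al_P -be_P -!mulmxA P1Q1 P2Q2 !mulmx1.
apply: (minorI_mulmx (X := block_mx Q0 0 0 Q1) (Y := block_mx P1 0 0 P2)).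
by block_simpl; rewrite -!mulmxA al_P be_P !mulmxA Q0P0 Q1P1 !mul1mx.
Qed.

(* The contracting homotopy [(sK, tK)] drives a base change that turns the
   contractible summand into an identity block of size [bK]. *)
Lemma minorI_diag_contractible a b c aK bK cK (al : 'M[R]_(a, b)) (be : 'M[R]_(b, c))
    (alK : 'M[R]_(aK, bK)) (beK : 'M[R]_(bK, cK)) (sK : 'M[R]_(bK, aK)) (tK : 'M[R]_(cK, bK)) :
    alK *m beK = 0 -> sK *m alK + beK *m tK = 1%:M ->
  forall r x,
    minorI (r + bK%:Z) (block_mx (block_mx al 0 0 alK) 0 0 (block_mx be 0 0 beK)) x <->
    minorI r (block_mx al 0 0 be) x.
Proof.
move=> alK_beK homK r x.
have alK_idem : alK *m sK *m alK = alK.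
  have : alK *m (sK *m alK + beK *m tK) = alK by rewrite homK mulmx1.
  by rewrite mulmxDr !mulmxA alK_beK mul0mx addr0.
have beK_idem : beK *m tK *m beK = beK.
  have : (sK *m alK + beK *m tK) *m beK = beK by rewrite homK mul1mx.
  by rewrite mulmxDl -(mulmxA sK) alK_beK mulmx0 add0r.
have beK_alK : beK *m tK *m sK *m alK = 0.
  have : beK *m tK *m (sK *m alK + beK *m tK) = beK *m tK by rewrite homK mulmx1.
  rewrite mulmxDr !mulmxA beK_idem.
  by move/(congr1 (fun z => z - beK *m tK)); rewrite addrK subrr.
split=> Ix.
  apply: minorI_block1_sub; apply: (minorI_mulmx (X := block_mx (block_mx 1%:M 0 0 0) (col_mx 0 alK)
      (block_mx 0 1%:M 0 0) (col_mx 0 (beK *m tK)))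
    (Y := block_mx (block_mx 1%:M 0 0 0) (block_mx 0 0 1%:M 0)
      (row_mx 0 (sK *m alK)) (row_mx 0 beK))) Ix.
  block_simpl; rewrite !mulmxA alK_idem alK_beK beK_idem beK_alK.
  by block_simpl; rewrite !add_corner_blocks.
apply: (minorI_mulmx (B := block_mx (block_mx al 0 0 be) 0 0 (1%:M : 'M_bK))
    (X := block_mx (block_mx 1%:M 0 0 0) (block_mx 0 0 1%:M 0) (row_mx 0 sK) (row_mx 0 1%:M))
    (Y := block_mx (block_mx 1%:M 0 0 0) (col_mx 0 1%:M) (block_mx 0 1%:M 0 0) (col_mx 0 tK))).
  by block_simpl; rewrite homK -block_mxEv.
exact: minorI_block1_sup.
Qed.

End DiagonalComplexes.

Section Coboundaries.
Variables (R : comNzRingType) (M : int -> lmodType R) (d : forall i : int, {linear M i -> M (i + 1)}).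

Lemma coboundaryP j (z : M (j + 1)) : coboundary d z -> exists y, z = d j y.
Proof.
move=> [j' [e [y ->]]].
have ej : j' = j by apply: (addIr 1); rewrite e.
by subst j'; rewrite (eq_irrelevance e erefl); exists y.
Qed.

Lemma coboundary_d j y : coboundary d (d j y).
Proof. by exists j, erefl, y. Qed.

Lemma coboundary0 i : coboundary d (0 : M i).
Proof.
have cast0 j (e : j = i) : eq_rect j (fun t => (M t : Type)) 0 i e = 0 by case: i / e.
by exists (i - 1), (subrK 1 i), 0; rewrite linear0 cast0.
Qed.

Lemma coboundaryD i (z1 z2 : M i) : coboundary d z1 -> coboundary d z2 -> coboundary d (z1 + z2).
Proof.
move=> [j1 [e1 [y1 ->]]] [j2 [e2 [y2 ->]]].
have ej : j2 = j1 by apply: (addIr 1); rewrite e1 e2.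
subst j2; rewrite (eq_irrelevance e2 e1); clear z1 z2 e2; case: i / e1.
by exists j1, erefl, (y1 + y2); rewrite linearD.
Qed.

Lemma coboundaryZ i a (z : M i) : coboundary d z -> coboundary d (a *: z).
Proof.
move=> [j [e [y ->]]]; clear z; case: i / e.
by exists j, erefl, (a *: y); rewrite linearZ.
Qed.

End Coboundaries.

Section RowLinear.
Variable R : comNzRingType.

(* Linearity as a property, for maps such as [x |-> phi1 x - phi2 (x *m f)]
   that carry no canonical [{linear _}] structure. *)
Definition rv_linear n (W : lmodType R) (F : 'rV[R]_n -> W) :=
  {morph F : x y / x + y} /\ scalable F.

Definition lincomb n (W : lmodType R) (v : 'I_n -> W) (x : 'rV[R]_n) : W :=
  \sum_k x 0 k *: v k.

Lemma lincomb0 n (W : lmodType R) (v : 'I_n -> W) : lincomb v 0 = 0.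
Proof. by rewrite /lincomb big1 // => k _; rewrite mxE scale0r. Qed.

Lemma lincomb_delta n (W : lmodType R) (v : 'I_n -> W) k : lincomb v (delta_mx 0 k) = v k.
Proof.
rewrite /lincomb (bigD1 k) //= big1 ?addr0 => [|j /negPf ne_jk]; first by rewrite mxE !eqxx scale1r.
by rewrite mxE ne_jk andbF scale0r.
Qed.

Lemma rv_linear_lincomb n (W : lmodType R) (v : 'I_n -> W) : rv_linear (lincomb v).
Proof.
split=> [x y | a x]; rewrite /lincomb.
  by rewrite -big_split; apply: eq_bigr => k _; rewrite mxE scalerDl.
by rewrite scaler_sumr; apply: eq_bigr => k _; rewrite mxE scalerA.
Qed.

Lemma rv_linearP n (W : lmodType R) (g : {linear 'rV[R]_n -> W}) : rv_linear g.
Proof. by split=> [x y | a x]; rewrite ?linearD ?linearZ. Qed.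

Lemma rv_linear_mulmx n m (W : lmodType R) (F : 'rV[R]_m -> W) (A : 'M[R]_(n, m)) :
  rv_linear F -> rv_linear (fun x => F (x *m A)).
Proof. by case=> FD FZ; split=> [x y | a x]; rewrite ?mulmxDl ?FD // -scalemxAl FZ. Qed.

Lemma rv_linear_comp n (W W' : lmodType R) (g : {linear W -> W'}) (F : 'rV[R]_n -> W) :
  rv_linear F -> rv_linear (fun x => g (F x)).
Proof. by case=> FD FZ; split=> [x y | a x]; rewrite ?FD ?FZ ?linearD ?linearZ. Qed.

Lemma rv_linearD n (W : lmodType R) (F G : 'rV[R]_n -> W) :
  rv_linear F -> rv_linear G -> rv_linear (fun x => F x + G x).
Proof.
case=> FD FZ [GD GZ]; split=> [x y | a x]; first by rewrite FD GD addrACA.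
by rewrite FZ GZ scalerDr.
Qed.

Lemma rv_linearB n (W : lmodType R) (F G : 'rV[R]_n -> W) :
  rv_linear F -> rv_linear G -> rv_linear (fun x => F x - G x).
Proof.
move=> HF [GD GZ]; apply: rv_linearD => //.
by split=> [x y | a x]; rewrite ?GD ?GZ ?opprD ?scalerN.
Qed.

Lemma rv_linear_ind n (W : lmodType R) (F : 'rV[R]_n -> W) (P : W -> Prop) :
  rv_linear F -> P 0 -> (forall u v, P u -> P v -> P (u + v)) ->
  (forall a u, P u -> P (a *: u)) ->
  (forall k, P (F (delta_mx 0 k))) -> forall x, P (F x).
Proof.
move=> [FD FZ] P0 PD PZ Pdelta x.
have F0 : F 0 = 0 by apply: (addIr (F 0)); rewrite -FD !add0r.
rewrite (row_sum_delta x); elim/big_rec: _ => [|k s _ Ps]; first by rewrite F0.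
by rewrite FD FZ; apply: PD => //; apply: PZ.
Qed.

Lemma rv_linear_eq n (W : lmodType R) (F G : 'rV[R]_n -> W) :
  rv_linear F -> rv_linear G -> (forall k, F (delta_mx 0 k) = G (delta_mx 0 k)) -> F =1 G.
Proof.
move=> HF HG eqFG x; apply/eqP; rewrite -subr_eq0; apply/eqP.
apply: (rv_linear_ind (F := fun x => F x - G x) (P := eq^~ 0)) => //.
- exact: rv_linearB.
- by move=> u v -> ->; rewrite addr0.
- by move=> a u ->; rewrite scaler0.
- by move=> k; rewrite eqFG subrr.
Qed.

End RowLinear.

Lemma int_neq_succ (L : int) : L != L + 1.
Proof. by rewrite eq_sym -subr_eq0 addrAC subrr add0r oner_eq0. Qed.

Section FreeComplex.
Variables (R : comNzRingType) (n : int -> nat) (D : forall i : int, 'M[R]_(n i, n (i + 1))).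

Lemma free_complex_mulmx : is_complex (free_diff D) -> forall i, D i *m D (i + 1) = 0.
Proof.
move=> cxD i; apply/row_matrixP => k; rewrite row0 rowE mulmxA.
exact: (cxD i (delta_mx 0 k)).
Qed.

Lemma rV_trivial_dim0 m : (forall x : 'rV[R]_m, x = 0) -> m = 0%N.
Proof.
case: m => // m all0; have /matrixP/(_ 0 ord0) := all0 (delta_mx 0 ord0).
by rewrite !mxE !eqxx => /eqP; rewrite oner_eq0.
Qed.

Lemma free_coboundaryP j (x : 'rV[R]_(n (j + 1))) :
  coboundary (free_diff D) x -> exists y, x = y *m D j.
Proof. exact: coboundaryP. Qed.

End FreeComplex.

Section Comparison.
Variables (R : comNzRingType) (E : int -> lmodType R) (dE : forall i : int, {linear E i -> E (i + 1)}).
Variables (n1 : int -> nat) (D1 : forall i : int, 'M[R]_(n1 i, n1 (i + 1))).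
Hypothesis F1_complex : is_complex (free_diff D1).
Variable phi1 : forall i : int, {linear free_mod R n1 i -> E i}.
Hypothesis phi1_qiso : quasi_iso (free_diff D1) dE phi1.
Variables (n2 : int -> nat) (D2 : forall i : int, 'M[R]_(n2 i, n2 (i + 1))).
Hypothesis F2_complex : is_complex (free_diff D2).
Variable phi2 : forall i : int, {linear free_mod R n2 i -> E i}.
Hypothesis phi2_qiso : quasi_iso (free_diff D2) dE phi2.
Variable N1 : int.
Hypothesis F1_bounded : forall i : int, N1 < i -> forall x : free_mod R n1 i, x = 0.

Let D1D1 i : D1 i *m D1 (i + 1) = 0. Proof. exact: free_complex_mulmx. Qed.
Let D2D2 i : D2 i *m D2 (i + 1) = 0. Proof. exact: free_complex_mulmx. Qed.

Let phi1_chain i (x : 'rV[R]_(n1 i)) : phi1 (i + 1) (x *m D1 i) = dE i (phi1 i x).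
Proof. by case: phi1_qiso => chain _ _; apply: chain. Qed.
Let phi2_chain i (x : 'rV[R]_(n2 i)) : phi2 (i + 1) (x *m D2 i) = dE i (phi2 i x).
Proof. by case: phi2_qiso => chain _ _; apply: chain. Qed.

Let phi1_inj i (x : 'rV[R]_(n1 (i + 1))) : x *m D1 (i + 1) = 0 ->
  coboundary dE (phi1 (i + 1) x) -> exists y, x = y *m D1 i.
Proof. by case: phi1_qiso => _ _ inj dx0 cob; apply: free_coboundaryP; apply: inj. Qed.
Let phi2_inj i (x : 'rV[R]_(n2 (i + 1))) : x *m D2 (i + 1) = 0 ->
  coboundary dE (phi2 (i + 1) x) -> exists y, x = y *m D2 i.
Proof. by case: phi2_qiso => _ _ inj dx0 cob; apply: free_coboundaryP; apply: inj. Qed.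

Let phi1_surj i (z : E i) : dE i z = 0 ->
  exists x : 'rV[R]_(n1 i), x *m D1 i = 0 /\ coboundary dE (z - phi1 i x).
Proof. by case: phi1_qiso => _ surj _ dz0; apply: surj. Qed.
Let phi2_surj i (z : E i) : dE i z = 0 ->
  exists x : 'rV[R]_(n2 i), x *m D2 i = 0 /\ coboundary dE (z - phi2 i x).
Proof. by case: phi2_qiso => _ surj _ dz0; apply: surj. Qed.

(* A chain map [F1 -> F2] is a family of matrices [f j]; a homotopy
   [phi1 ~ phi2 o f] is given by the images [h j k] of the basis vectors. *)
Definition chain_mx_at (f : forall j, 'M[R]_(n1 j, n2 j)) j := D1 j *m f (j + 1) = f j *m D2 j.

Definition homotopy_at (f : forall j, 'M[R]_(n1 j, n2 j)) (h : forall j, 'I_(n1 (j + 1)) -> E j) j :=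
  forall x : 'rV[R]_(n1 (j + 1)), phi1 (j + 1) x - phi2 (j + 1) (x *m f (j + 1)) =
    dE j (lincomb (h j) x) + lincomb (h (j + 1)) (x *m D1 (j + 1)).

Definition homotopy_mod_coboundary (f : forall j, 'M[R]_(n1 j, n2 j))
    (h : forall j, 'I_(n1 (j + 1)) -> E j) L :=
  forall x : 'rV[R]_(n1 L),
    coboundary dE (phi1 L x - phi2 L (x *m f L) - lincomb (h L) (x *m D1 L)).

Definition comparison_from L := exists f h,
  (forall j, L <= j -> chain_mx_at f j /\ homotopy_at f h j) /\ homotopy_mod_coboundary f h L.

Lemma comparison_from_above L : N1 < L -> comparison_from L.
Proof.
move=> lt_N1L; exists (fun j => 0), (fun j k => 0); split.
  move=> j le_Lj; split; first by rewrite /chain_mx_at mulmx0 mul0mx.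
  move=> x; rewrite (F1_bounded (i := j + 1) _ x); last by lia.
  by rewrite !linear0 mul0mx !lincomb0 linear0 ?subr0 ?oppr0 ?addr0.
move=> x; rewrite (F1_bounded lt_N1L x).
by rewrite !mul0mx !linear0 !lincomb0 ?subr0 ?oppr0 ?addr0; apply: coboundary0.
Qed.

Lemma homotopy_complete (f : forall j, 'M[R]_(n1 j, n2 j)) (h : forall j, 'I_(n1 (j + 1)) -> E j) L : homotopy_mod_coboundary f h (L + 1) ->
  exists hL : 'I_(n1 (L + 1)) -> E L, forall x : 'rV[R]_(n1 (L + 1)),
    phi1 (L + 1) x - phi2 (L + 1) (x *m f (L + 1)) =
    dE L (lincomb hL x) + lincomb (h (L + 1)) (x *m D1 (L + 1)).
Proof.
move=> hmod.
have [hL hLP] := fin_all_exists (fun k => coboundaryP (hmod (delta_mx 0 k))).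
exists hL; apply: rv_linear_eq => [||k].
- apply: rv_linearB; first exact: rv_linearP.
  by apply: rv_linear_mulmx; apply: rv_linearP.
- apply: rv_linearD; first by apply: rv_linear_comp; apply: rv_linear_lincomb.
  by apply: rv_linear_mulmx; apply: rv_linear_lincomb.
- by rewrite lincomb_delta -hLP subrK.
Qed.

Lemma chain_mx_lift (f : forall j, 'M[R]_(n1 j, n2 j)) (h : forall j, 'I_(n1 (j + 1)) -> E j)
    L (hL : 'I_(n1 (L + 1)) -> E L) (e : 'rV[R]_(n1 L)) :
  chain_mx_at f (L + 1) ->
  (forall x : 'rV[R]_(n1 (L + 1)), phi1 (L + 1) x - phi2 (L + 1) (x *m f (L + 1)) =
     dE L (lincomb hL x) + lincomb (h (L + 1)) (x *m D1 (L + 1))) ->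
  exists x : 'rV[R]_(n2 L), e *m D1 L *m f (L + 1) = x *m D2 L /\
    coboundary dE (phi1 L e - phi2 L x - lincomb hL (e *m D1 L)).
Proof.
move=> f_chain hL_htpy; set y := e *m D1 L *m f (L + 1).
have y_cocycle : y *m D2 (L + 1) = 0.
  by rewrite /y -mulmxA -f_chain !mulmxA -(mulmxA e) D1D1 mulmx0 !mul0mx.
have phi2_y : phi2 (L + 1) y = dE L (phi1 L e - lincomb hL (e *m D1 L)).
  have := hL_htpy (e *m D1 L).
  rewrite -[e *m D1 L *m D1 (L + 1)]mulmxA D1D1 mulmx0 lincomb0 addr0 phi1_chain => htpy.
  by rewrite linearB -htpy opprB [X in _ = X]addrC subrK.
have [x0 y_x0] := phi2_inj y_cocycle (ltac:(rewrite phi2_y; apply: coboundary_d)).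
set w := phi1 L e - phi2 L x0 - lincomb hL (e *m D1 L).
have w_cocycle : dE L w = 0 by rewrite /w addrAC linearB -phi2_y -phi2_chain -y_x0 subrr.
have [x1 [x1_cocycle w_x1]] := phi2_surj w_cocycle.
exists (x0 + x1); split; first by rewrite mulmxDl x1_cocycle addr0 -y_x0.
suff -> : phi1 L e - phi2 L (x0 + x1) - lincomb hL (e *m D1 L) = w - phi2 L x1 by [].
by rewrite /w linearD opprD addrA [RHS]addrAC.
Qed.

Lemma comparison_from_pred L : comparison_from (L + 1) -> comparison_from L.
Proof.
move=> [f [h [fh_above hmod]]].
have [f_chain _] := fh_above (L + 1) (lexx _).
have [hL hL_htpy] := homotopy_complete hmod.
have [rows rowsP] := fin_all_exists (fun k => chain_mx_lift (delta_mx 0 k) f_chain hL_htpy).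
pose fL : 'M[R]_(n1 L, n2 L) := \matrix_(k < n1 L) rows k.
have fL_delta k : delta_mx 0 k *m fL = rows k by rewrite -rowE rowK.
exists (dfwith f fL), (dfwith h hL); split.
  move=> j le_Lj; have [<- | ne_Lj] := eqVneq L j.
    rewrite /chain_mx_at /homotopy_at !dfwith_in !(dfwith_out _ _ (int_neq_succ L)).
    split=> //; apply/row_matrixP => k; rewrite !rowE !mulmxA fL_delta.
    by case: (rowsP k).
  have ne_Lj1 : L != j + 1 by lia.
  rewrite /chain_mx_at /homotopy_at !(dfwith_out _ _ ne_Lj) !(dfwith_out _ _ ne_Lj1).
  by apply: fh_above; lia.
move=> x; rewrite !dfwith_in.
apply: (rv_linear_ind (F := fun x => phi1 L x - phi2 L (x *m fL) - lincomb hL (x *m D1 L))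
                      (P := fun z => coboundary dE z)) => [||||k].
- apply: rv_linearB; [apply: rv_linearB | exact: rv_linear_mulmx (rv_linear_lincomb _)].
    exact: rv_linearP.
  by apply: rv_linear_mulmx; apply: rv_linearP.
- exact: coboundary0.
- exact: coboundaryD.
- exact: coboundaryZ.
- by rewrite /= fL_delta; case: (rowsP k).
Qed.

Lemma comparison_exists L : exists f h, forall j, L <= j -> chain_mx_at f j /\ homotopy_at f h j.
Proof.
suff [f [h [fh _]]] : comparison_from L by exists f, h.
have step (m : nat) : comparison_from (N1 + 1 - m%:Z).
  elim: m => [|m IH]; first by apply: comparison_from_above; lia.
  by apply: comparison_from_pred; have -> : N1 + 1 - m.+1%:Z + 1 = N1 + 1 - m%:Z by lia.
have [le_LN1 | lt_N1L] := lerP L N1; last exact: comparison_from_above.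
by have := step (absz (N1 + 1 - L)%R); have -> : N1 + 1 - (absz (N1 + 1 - L)%R)%:Z = L by lia.
Qed.

Section Cone.
Variables (f : forall j, 'M[R]_(n1 j, n2 j)) (h : forall j, 'I_(n1 (j + 1)) -> E j) (L0 : int).
Hypothesis fh : forall j, L0 <= j -> chain_mx_at f j /\ homotopy_at f h j.

(* The cone of [f], shifted so that degree [d] is [F1^(d+1) (+) F2^d]. *)
Definition cone_dim d := (n1 (d + 1) + n2 d)%N.

Definition cone_diff d : 'M[R]_(cone_dim d, cone_dim (d + 1)) :=
  block_mx (- D1 (d + 1)) (f (d + 1)) 0 (D2 d).

Lemma cone_diff_sq0 d : L0 <= d + 1 -> cone_diff d *m cone_diff (d + 1) = 0.
Proof.
move=> le_L0d; have [f_chain _] := fh le_L0d.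
rewrite /cone_diff mulmx_block !mulmx0 !mul0mx !addr0 !add0r mulNmx mulmxN opprK D1D1 D2D2.
by rewrite mulNmx f_chain addNr block_mx0.
Qed.

Lemma cone_exact d : L0 <= d -> forall w : 'rV[R]_(cone_dim (d + 1)),
  w *m cone_diff (d + 1) = 0 -> exists u : 'rV[R]_(cone_dim d), w = u *m cone_diff d.
Proof.
move=> le_L0d w; have [f_chain htpy] : chain_mx_at f (d + 1) /\ homotopy_at f h (d + 1).
  by apply: fh; lia.
have [_ htpy_d] := fh le_L0d.
rewrite -[w]hsubmxK; set x := lsubmx w; set z := rsubmx w.
rewrite /cone_diff mul_row_block !mulmx0 !addr0 -row_mx0 => /eq_row_mx[].
rewrite mulmxN => /eqP; rewrite oppr_eq0 => /eqP x_cocycle xf_zD2.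
have phi1x_cob : coboundary dE (phi1 (d + 1 + 1) x).
  have := htpy x; rewrite x_cocycle lincomb0 addr0.
  have -> : x *m f (d + 1 + 1) = - (z *m D2 (d + 1)) by apply/eqP; rewrite -addr_eq0 xf_zD2.
  rewrite linearN phi2_chain opprK => /(congr1 (fun t => t - dE (d + 1) (phi2 (d + 1) z))).
  by rewrite addrK => ->; rewrite -linearB; apply: coboundary_d.
have [y x_y] := phi1_inj x_cocycle phi1x_cob.
set v := z + y *m f (d + 1).
have v_cocycle : v *m D2 (d + 1) = 0.
  by rewrite /v mulmxDl -mulmxA -f_chain mulmxA -x_y [LHS]addrC.
have [y0 [y0_cocycle v_y0_cob]] : exists y0 : 'rV_(n1 (d + 1)), y0 *m D1 (d + 1) = 0 /\
    coboundary dE (phi2 (d + 1) v - phi1 (d + 1) y0).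
  by apply: phi1_surj; rewrite -phi2_chain v_cocycle linear0.
have v'_cocycle : (v - y0 *m f (d + 1)) *m D2 (d + 1) = 0.
  by rewrite mulmxBl v_cocycle -mulmxA -f_chain mulmxA y0_cocycle mul0mx subrr.
have v'_cob : coboundary dE (phi2 (d + 1) (v - y0 *m f (d + 1))).
  have := htpy_d y0; rewrite y0_cocycle lincomb0 addr0 => y0_htpy.
  rewrite linearB -[phi2 _ v](subrK (phi1 (d + 1) y0)) -addrA y0_htpy.
  by apply: coboundaryD v_y0_cob _; apply: coboundary_d.
have [z2 v'_z2] := phi2_inj v'_cocycle v'_cob.
exists (row_mx (y0 - y) z2).
rewrite /cone_diff mul_row_block mulmx0 addr0; congr row_mx.
  by rewrite mulmxN mulmxBl y0_cocycle sub0r opprK x_y.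
by rewrite -v'_z2 /v mulmxBl [RHS]addrC [RHS]addrA subrK addrK.
Qed.

End Cone.

End Comparison.

Section Contraction.
Variables (R : comNzRingType) (c : int -> nat) (D : forall d, 'M[R]_(c d, c (d + 1))) (L0 N : int).
Hypothesis D_sq0 : forall d, L0 <= d -> D (d + 1) *m D (d + 1 + 1) = 0.
Hypothesis D_exact : forall d, L0 <= d -> forall w : 'rV[R]_(c (d + 1)),
  w *m D (d + 1) = 0 -> exists u, w = u *m D d.
Hypothesis D_bounded : forall d, N < d -> c d = 0%N.

Definition contraction_at (S : forall d, 'M[R]_(c (d + 1), c d)) d :=
  S d *m D d + D (d + 1) *m S (d + 1) = 1%:M.

Definition contractible_from L := exists S, forall d, L <= d -> contraction_at S d.

Lemma contractible_from_above L : N < L -> contractible_from L.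
Proof.
move=> lt_NL; exists (fun d => 0) => d le_Ld.
have c0 : c (d + 1) = 0%N by apply: D_bounded; lia.
by apply/matrixP => i; have := ltn_ord i; rewrite {2}c0.
Qed.

(* Exactness at [L + 1] lets each row of [1 - D (L+1) S (L+1)] be written as [u *m D L]. *)
Lemma contractible_from_pred L : L0 <= L -> contractible_from (L + 1) -> contractible_from L.
Proof.
move=> le_L0L [S S_contr].
have S_L1 : contraction_at S (L + 1) by apply: S_contr.
have rows_ex (k : 'I_(c (L + 1))) : exists u : 'rV[R]_(c L),
    delta_mx 0 k - delta_mx 0 k *m D (L + 1) *m S (L + 1) = u *m D L.
  apply: D_exact => //; rewrite mulmxBl -!mulmxA.
  have -> : S (L + 1) *m D (L + 1) = 1%:M - D (L + 1 + 1) *m S (L + 1 + 1).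
    by rewrite -S_L1 addrK.
  by rewrite mulmxBr mulmx1 [D (L + 1) *m (_ *m _)]mulmxA D_sq0 // mul0mx subr0 subrr.
have [rows rowsP] := fin_all_exists rows_ex.
pose SL : 'M[R]_(c (L + 1), c L) := \matrix_(k < c (L + 1)) rows k.
exists (dfwith S SL) => d le_Ld; have [<- | ne_Ld] := eqVneq L d.
  rewrite /contraction_at dfwith_in (dfwith_out _ _ (int_neq_succ L)).
  apply/row_matrixP => k; rewrite linearD /= !row_mul rowK row1 rowE -rowsP.
  by rewrite subrK.
have ne_Ld1 : L != d + 1 by lia.
rewrite /contraction_at !(dfwith_out _ _ ne_Ld) !(dfwith_out _ _ ne_Ld1); apply: S_contr; lia.
Qed.

Lemma exact_bounded_contractible : contractible_from L0.
Proof.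
have [lt_NL0 | le_L0N] := ltrP N L0; first exact: contractible_from_above.
have step (m : nat) : L0 <= N + 1 - m%:Z -> contractible_from (N + 1 - m%:Z).
  elim: m => [|m IH] le_L0m; first by apply: contractible_from_above; lia.
  apply: contractible_from_pred => //.
  have -> : N + 1 - m.+1%:Z + 1 = N + 1 - m%:Z by lia.
  by apply: IH; lia.
have e : N + 1 - (absz (N + 1 - L0)%R)%:Z = L0 by lia.
by have := step (absz (N + 1 - L0)%R); rewrite e; apply.
Qed.

End Contraction.

Section Cylinder.
Variable R : comNzRingType.
Variables (n1 : int -> nat) (D1 : forall i : int, 'M[R]_(n1 i, n1 (i + 1))).
Variables (n2 : int -> nat) (D2 : forall i : int, 'M[R]_(n2 i, n2 (i + 1))).
Variable f : forall j, 'M[R]_(n1 j, n2 j).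
Variable S : forall d, 'M[R]_(cone_dim n1 n2 (d + 1), cone_dim n1 n2 d).

Local Notation cone_dim := (cone_dim n1 n2).
Local Notation cone_diff := (cone_diff D1 D2 f).

(* The split exact complex [F1^d (+) F1^(d+1)] with differential [(a, b) |-> (b, 0)]. *)
Definition triv_dim d := (n1 d + n1 (d + 1))%N.
Definition triv_diff d : 'M[R]_(triv_dim d, triv_dim (d + 1)) := block_mx 0 0 1%:M 0.
Definition triv_contraction d : 'M[R]_(triv_dim (d + 1), triv_dim d) := block_mx 0 1%:M 0 0.

Lemma triv_diff_sq0 d : triv_diff d *m triv_diff (d + 1) = 0.
Proof. by rewrite /triv_diff; block_simpl. Qed.

Lemma triv_contractionP d :
  triv_contraction d *m triv_diff d + triv_diff (d + 1) *m triv_contraction (d + 1) = 1%:M.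
Proof. by rewrite /triv_diff /triv_contraction; block_simpl; rewrite -scalar_mx_block. Qed.

(* The mapping cylinder of [f], with [Cyl^d = F1^d (+) F1^(d+1) (+) F2^d]. *)
Definition cyl_diff d : 'M[R]_(n1 d + cone_dim d, n1 (d + 1) + cone_dim (d + 1)) :=
  block_mx (D1 d) 0 (col_mx (- 1%:M) 0) (cone_diff d).

Definition cyl_split j : 'M[R]_(n1 (j + 1) + cone_dim (j + 1)) :=
  block_mx 1%:M 0 (S j *m col_mx 1%:M 0) 1%:M.
Definition cyl_split_inv j : 'M[R]_(n1 (j + 1) + cone_dim (j + 1)) :=
  block_mx 1%:M 0 (- (S j *m col_mx 1%:M 0)) 1%:M.

Lemma cyl_splitK j : cyl_split j *m cyl_split_inv j = 1%:M.
Proof. by rewrite /cyl_split /cyl_split_inv; block_simpl; rewrite addrN -scalar_mx_block. Qed.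

Lemma cyl_split_invK j : cyl_split_inv j *m cyl_split j = 1%:M.
Proof. by rewrite /cyl_split /cyl_split_inv; block_simpl; rewrite addNr -scalar_mx_block. Qed.

Lemma cyl_split_chain j : S j *m cone_diff j + cone_diff (j + 1) *m S (j + 1) = 1%:M ->
  cyl_diff (j + 1) *m cyl_split (j + 1) =
  cyl_split j *m block_mx (D1 (j + 1)) 0 0 (cone_diff (j + 1)).
Proof.
move=> S_contr.
have S_contr' : cone_diff (j + 1) *m S (j + 1) = 1%:M - S j *m cone_diff j.
  by rewrite -S_contr [RHS]addrC addKr.
have diff_incl : cone_diff j *m col_mx 1%:M 0 = - (col_mx 1%:M 0 *m D1 (j + 1)).
  by rewrite /cone_diff; block_simpl; rewrite opp_col_mx oppr0.
rewrite /cyl_diff /cyl_split !mulmx_block ?mulmx1 ?mul1mx ?mulmx0 ?mul0mx ?addr0 ?add0r.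
congr block_mx; rewrite mulmxA S_contr' mulmxBl mul1mx -[S j *m cone_diff j *m _]mulmxA.
by rewrite diff_incl mulmxN opprK mulmxA addrA add_col_mx addNr addr0 col_mx0 add0r.
Qed.

Definition cyl_to_target d : 'M[R]_(n1 d + cone_dim d, n2 d + triv_dim d) :=
  block_mx (f d) (row_mx 1%:M (D1 d)) (col_mx 0 1%:M) (block_mx 0 (- 1%:M) 0 0).
Definition cyl_to_target_inv d : 'M[R]_(n2 d + triv_dim d, n1 d + cone_dim d) :=
  block_mx 0 (row_mx 0 1%:M) (col_mx 1%:M 0) (block_mx (D1 d) (- f d) (- 1%:M) 0).

Lemma cyl_to_targetK d : cyl_to_target d *m cyl_to_target_inv d = 1%:M.
Proof.
rewrite /cyl_to_target /cyl_to_target_inv; block_simpl.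
rewrite !mulmxN !mulNmx !mulmx1 opprK !subrr.
rewrite [RHS](scalar_mx_block (n1 d)); congr block_mx; last by rewrite -scalar_mx_block.
by apply/matrixP => i j; rewrite !mxE; case: split => ?; rewrite mxE.
Qed.

Lemma cyl_to_target_invK d : cyl_to_target_inv d *m cyl_to_target d = 1%:M.
Proof.
rewrite /cyl_to_target /cyl_to_target_inv; block_simpl.
rewrite !mulmxN !mulNmx !mulmx1 opprK !subrr.
rewrite [RHS](scalar_mx_block (n2 d)); congr block_mx; last by rewrite -scalar_mx_block.
by apply/matrixP => i j; rewrite !mxE; case: split => ?; rewrite mxE.
Qed.

Lemma cyl_to_target_chain d :
  D1 d *m f (d + 1) = f d *m D2 d -> D1 d *m D1 (d + 1) = 0 ->
  cyl_diff d *m cyl_to_target (d + 1) =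
  cyl_to_target d *m block_mx (D2 d) 0 0 (triv_diff d).
Proof.
move=> f_chain D1D1; rewrite /cyl_diff /cyl_to_target /triv_diff /cone_diff; block_simpl.
rewrite !mulNmx !mulmxN !mul1mx !mulmx1 opprK addNr D1D1 f_chain ?addNr.
congr block_mx; rewrite block_mxEv; congr col_mx.
by apply/matrixP => i j; rewrite !mxE; case: split => ?; rewrite mxE.
Qed.

(* [F1 ~ F1 (+) cone f ~ Cyl f ~ F2 (+) T], all at degrees [p+1, p+2]. *)
Lemma minorI_diag_transfer p r1 r2 x :
  (forall j, j = p \/ j = p + 1 ->
     S j *m cone_diff j + cone_diff (j + 1) *m S (j + 1) = 1%:M) ->
  cone_diff (p + 1) *m cone_diff (p + 1 + 1) = 0 ->
  (forall j, j = p + 1 \/ j = p + 1 + 1 -> D1 j *m f (j + 1) = f j *m D2 j) ->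
  (forall j, j = p + 1 \/ j = p + 1 + 1 -> D1 j *m D1 (j + 1) = 0) ->
  r1 + (cone_dim (p + 1 + 1))%:Z = r2 + (triv_dim (p + 1 + 1))%:Z ->
  minorI r1 (block_mx (D1 (p + 1)) 0 0 (D1 (p + 1 + 1))) x <->
  minorI r2 (block_mx (D2 (p + 1)) 0 0 (D2 (p + 1 + 1))) x.
Proof.
move=> S_contr cone_sq0 f_chain D1D1 r12.
rewrite -(minorI_diag_contractible _ _ cone_sq0 (S_contr (p + 1) (or_intror erefl))).
rewrite -(minorI_diag_iso
  (cyl_split_chain (S_contr p (or_introl erefl)))
  (cyl_split_chain (S_contr (p + 1) (or_intror erefl)))
  (cyl_split_invK _) (cyl_splitK _) (cyl_split_invK _) (cyl_splitK _)).
rewrite (minorI_diag_iso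
  (cyl_to_target_chain (f_chain _ (or_introl erefl)) (D1D1 _ (or_introl erefl)))
  (cyl_to_target_chain (f_chain _ (or_intror erefl)) (D1D1 _ (or_intror erefl)))
  (cyl_to_target_invK _) (cyl_to_targetK _) (cyl_to_target_invK _) (cyl_to_targetK _)).
by rewrite r12 (minorI_diag_contractible _ _ (triv_diff_sq0 _) (triv_contractionP _)).
Qed.

End Cylinder.

Lemma jump_ideal_pred (R : comNzRingType) (n : int -> nat) (D : forall i : int, 'M[R]_(n i, n (i + 1)))
    (q k : int) x :
  jump_ideal D (q + 1) k x <-> minor_ideal ((n (q + 1))%:Z - k + 1) (block_mx (D q) 0 0 (D (q + 1))) x.
Proof.
rewrite /jump_ideal /sum_diff.
by move: (addrK 1 q); move: (q + 1 - 1) => t e; subst t.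
Qed.

Unset Implicit Arguments.
Theorem mainTheorem1 (R : comNzRingType) (HR : noetherian R)
  (E : int -> lmodType R) (dE : forall i : int, {linear E i -> E (i + 1)})
  (HEc : is_complex dE) (HEb : bounded_above E)
  (HEfg : forall i : int, fg_cohomology dE i)
  (n1 : int -> nat) (D1 : forall i : int, 'M[R]_(n1 i, n1 (i + 1)))
  (HF1c : is_complex (free_diff D1)) (HF1b : bounded_above (free_mod R n1))
  (phi1 : forall i : int, {linear free_mod R n1 i -> E i})
  (Hphi1 : quasi_iso (free_diff D1) dE phi1)
  (n2 : int -> nat) (D2 : forall i : int, 'M[R]_(n2 i, n2 (i + 1)))
  (HF2c : is_complex (free_diff D2)) (HF2b : bounded_above (free_mod R n2))
  (phi2 : forall i : int, {linear free_mod R n2 i -> E i})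
  (Hphi2 : quasi_iso (free_diff D2) dE phi2) :
  forall (i k : int) (x : R), jump_ideal D1 i k x <-> jump_ideal D2 i k x.
Proof.
move=> i k x; have [N1 F1_bounded] := HF1b; have [N2 F2_bounded] := HF2b.
set p := i - 2; have -> : i = p + 1 + 1 by rewrite /p; lia.
rewrite !jump_ideal_pred !minor_idealE.
have [f [h fh]] := comparison_exists HF1c Hphi1 Hphi2 F1_bounded (p - 3).
have cone_sq0 d : p - 3 <= d -> cone_diff D1 D2 f (d + 1) *m cone_diff D1 D2 f (d + 1 + 1) = 0.
  by move=> le_d; apply: (cone_diff_sq0 HF1c HF2c fh); lia.
have cone_bounded d : Num.max N1 N2 < d -> cone_dim n1 n2 d = 0%N.
  rewrite gt_max => /andP[lt_N1d lt_N2d].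
  rewrite /cone_dim (rV_trivial_dim0 (F1_bounded (d + 1) _)) ?(rV_trivial_dim0 (F2_bounded d _)) //.
  by lia.
have [S S_contr] := exact_bounded_contractible cone_sq0
  (cone_exact Hphi1 Hphi2 fh) cone_bounded.
apply: (minorI_diag_transfer (S := S)).
- by move=> j [->|->]; apply: S_contr; lia.
- by apply: cone_sq0; lia.
- by move=> j j_p; case: (fh j); first by case: j_p => ->; lia.
- by move=> j _; apply: free_complex_mulmx.
- by rewrite /cone_dim /triv_dim !PoszD; ring.
Qed.
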